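(* Let $(X,+,d)$ be a complete, locally compact Abelian metric group with translation-invariant metric $d$. Let $A\in K(X)$. If $S(A)=\{0\}$, then the spectre operator $S:K(X)\to K(X)$ is continuous at $A$ with respect to the Pompeiu–Hausdorff metric.
   Context: $d$ satisfies $d(x,y)=d(x+z,y+z)$ for all $x,y,z\in X$; $0$ is the neutral element. $K(X)$ is the family of non-empty compact subsets of $X$ with the Pompeiu–Hausdorff metric $d_H(A,B)=\max\{\sup_{a\in A}d(a,B),\sup_{b\in B}d(A,b)\}$. The spectre of $A\subset X$ is $S(A):=\{z\in X:\ \forall_{a\in A}\ (a+z\in A \text{ or } a-z\in A)\}$; it is compact for compact non-empty $A$. *)

From Stdlib Require Import Reals.
From Coquelicot Require Import Coquelicot.
Open Scope R_scope.
Set Implicit Arguments.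
Unset Strict Implicit.

Section MetricGroup.
Variables (X : Type) (add : X -> X -> X) (opp : X -> X) (zero : X)
          (d : X -> X -> R).

Definition abelian_group : Prop :=
  (forall x y z, add x (add y z) = add (add x y) z) /\
  (forall x y, add x y = add y x) /\
  (forall x, add x zero = x) /\
  (forall x, add x (opp x) = zero).

Definition is_metric : Prop :=
  (forall x y, 0 <= d x y) /\
  (forall x y, d x y = 0 <-> x = y) /\
  (forall x y, d x y = d y x) /\
  (forall x y z, d x z <= d x y + d y z).

Definition translation_invariant : Prop :=
  forall x y z, d x y = d (add x z) (add y z).

Definition open_set (U : X -> Prop) : Prop :=
  forall x, U x -> exists r, 0 < r /\ forall y, d x y < r -> U y.

Definition compact (A : X -> Prop) : Prop :=
  forall (I : Type) (U : I -> X -> Prop),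
    (forall i, open_set (U i)) ->
    (forall x, A x -> exists i, U i x) ->
    exists l : list I, forall x, A x -> exists i, List.In i l /\ U i x.

Definition cauchy_seq (u : nat -> X) : Prop :=
  forall eps, 0 < eps -> exists N, forall m n, (N <= m)%nat -> (N <= n)%nat ->
    d (u m) (u n) < eps.

Definition seq_converges (u : nat -> X) (l : X) : Prop :=
  forall eps, 0 < eps -> exists N, forall n, (N <= n)%nat -> d (u n) l < eps.

Definition complete : Prop :=
  forall u, cauchy_seq u -> exists l, seq_converges u l.

Definition locally_compact : Prop :=
  forall x, exists (K : X -> Prop) r, compact K /\ 0 < r /\
    forall y, d x y < r -> K y.

Definition complete_lc_abelian_metric_group : Prop :=
  abelian_group /\ is_metric /\ translation_invariant /\ complete /\
  locally_compact.

Definition in_KX (A : X -> Prop) : Prop := (exists a, A a) /\ compact A.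

Definition dist_pt_set (x : X) (B : X -> Prop) : R :=
  real (Glb_Rbar (fun r => exists b, B b /\ r = d x b)).

Definition excess (A B : X -> Prop) : R :=
  real (Lub_Rbar (fun r => exists a, A a /\ r = dist_pt_set a B)).

Definition hausdorff (A B : X -> Prop) : R := Rmax (excess A B) (excess B A).

Definition spectre (A : X -> Prop) : X -> Prop :=
  fun z => forall a, A a -> A (add a z) \/ A (add a (opp z)).

End MetricGroup.

(* If the Hausdorff distance from B to A is below delta, every element of S(B)
   is a (2 delta)-approximate element of the spectre of A: for each a in A, one
   of a + z, a - z lies within 2 delta of A.  If w is not in S(A), some a in A
   has a + w and a - w outside the closed set A, so for a small rho no point
   rho-close to w is a rho-approximate spectre element.  For fixed a0 in A, an
   approximate spectre element z has a0 + z or a0 - z close to some c in A, i.e.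
   z or -z close to c - a0; as S(A) = {0}, a Lebesgue number of the compact set
   A then yields r > 0 such that every r-approximate spectre element is
   eps-close to 0.  Since 0 lies in every spectre, S(B) is
   then eps-close to S(A) = {0}. *)

From Pilot Require Import Defs.
From Stdlib Require Import Reals Lra List Classical.
From Coquelicot Require Import Coquelicot.
Open Scope R_scope.
Set Implicit Arguments.

Lemma Lub_Rbar_lt_elem (E : R -> Prop) (M c y : R) :
  (forall x, E x -> x <= M) -> real (Lub_Rbar E) < c -> E y -> y < c.
Proof.
  intros HM Hc Hy. destruct (Lub_Rbar_correct E) as [Hub Hlub].
  assert (Hle : Rbar_le (Lub_Rbar E) M) by (apply Hlub; intros x Hx; apply HM, Hx).
  specialize (Hub y Hy).
  destruct (Lub_Rbar E); simpl in *; try contradiction; lra.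
Qed.

(* [0 <= M] covers the empty case, where the supremum is -oo with real part 0. *)
Lemma Lub_Rbar_le_bound (E : R -> Prop) (M : R) :
  0 <= M -> (forall x, E x -> x <= M) -> real (Lub_Rbar E) <= M.
Proof.
  intros H0 HM. destruct (Lub_Rbar_correct E) as [_ Hlub].
  assert (Hle : Rbar_le (Lub_Rbar E) M) by (apply Hlub; intros x Hx; apply HM, Hx).
  destruct (Lub_Rbar E); simpl in *; try contradiction; lra.
Qed.

Lemma Glb_Rbar_le_elem (E : R -> Prop) (y : R) :
  (forall x, E x -> 0 <= x) -> E y -> real (Glb_Rbar E) <= y.
Proof.
  intros H0 Hy. destruct (Glb_Rbar_correct E) as [Hlb Hglb].
  assert (Hge : Rbar_le 0 (Glb_Rbar E)) by (apply Hglb; intros x Hx; apply H0, Hx).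
  specialize (Hlb y Hy).
  destruct (Glb_Rbar E); simpl in *; try contradiction; lra.
Qed.

Lemma Glb_Rbar_lt_elim (E : R -> Prop) (y c : R) :
  (forall x, E x -> 0 <= x) -> E y -> real (Glb_Rbar E) < c ->
  exists z, E z /\ z < c.
Proof.
  intros H0 Hy Hc. apply NNPP; intros Hnone.
  destruct (Glb_Rbar_correct E) as [Hlb Hglb].
  assert (Hge : Rbar_le c (Glb_Rbar E)).
  { apply Hglb; intros x Hx. apply Rnot_lt_le; intros Hxc. apply Hnone; eauto. }
  specialize (Hlb y Hy).
  destruct (Glb_Rbar E); simpl in *; try contradiction; lra.
Qed.

Lemma list_upper_bound (I : Type) (f : I -> R) (l : list I) :
  exists M, forall i, In i l -> f i <= M.
Proof.
  induction l as [|a l [M HM]].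
  - exists 0; intros i [].
  - exists (Rmax (f a) M); intros i [<-|Hi].
    + apply Rmax_l.
    + eapply Rle_trans; [apply HM, Hi|apply Rmax_r].
Qed.

Lemma list_pos_lower_bound (I : Type) (f : I -> R) (l : list I) :
  exists r, 0 < r /\ forall i, In i l -> 0 < f i -> r <= f i.
Proof.
  induction l as [|a l [r [Hr Hl]]].
  - exists 1; split; [lra|intros i []].
  - destruct (Rlt_dec 0 (f a)) as [Ha|Ha].
    + exists (Rmin (f a) r); split; [now apply Rmin_pos|].
      intros i [<-|Hi] Hi0; [apply Rmin_l|].
      eapply Rle_trans; [apply Rmin_r|now apply Hl].
    + exists r; split; [exact Hr|].
      intros i [<-|Hi] Hi0; [contradiction|now apply Hl].
Qed.

Section CompactMetric.
Variables (X : Type) (d : X -> X -> R).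
Hypothesis Hm : is_metric d.

Lemma dist_ge0 x y : 0 <= d x y.
Proof. destruct Hm as (H & _); apply H. Qed.

Lemma dist_refl x : d x x = 0.
Proof. destruct Hm as (_ & H & _); now apply H. Qed.

Lemma dist_pos x y : x <> y -> 0 < d x y.
Proof.
  intros Hxy. destruct Hm as (H0 & H1 & _).
  destruct (Rle_lt_or_eq_dec _ _ (H0 x y)) as [Hlt|Heq]; [exact Hlt|].
  now destruct Hxy; apply H1.
Qed.

Lemma dist_sym x y : d x y = d y x.
Proof. destruct Hm as (_ & _ & H & _); apply H. Qed.

Lemma dist_triangle x y z : d x z <= d x y + d y z.
Proof. destruct Hm as (_ & _ & _ & H); apply H. Qed.

Lemma open_ball c r : Defs.open_set d (fun y => d c y < r).
Proof.
  intros x Hx. exists (r - d c x); split; [lra|].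
  intros y Hy. pose proof (dist_triangle c x y). lra.
Qed.

Lemma compact_bounded A a0 : Defs.compact d A -> exists M, forall a, A a -> d a0 a <= M.
Proof.
  intros HA.
  destruct (HA R (fun M y => d a0 y < M)) as [l Hl].
  - intros M; apply open_ball.
  - intros x _. exists (d a0 x + 1); lra.
  - destruct (list_upper_bound (fun M => M) l) as [M HM]. exists M.
    intros a Ha. destruct (Hl a Ha) as [M' [HM' Ha']].
    specialize (HM M' HM'). lra.
Qed.

Lemma compact_lebesgue_number A (P : X -> R -> Prop) : Defs.compact d A ->
  (forall c, A c -> exists rho, 0 < rho /\ P c rho) ->
  exists r, 0 < r /\ forall x, A x -> exists c rho, P c rho /\ d c x + r < rho.
Proof.
  intros HA HP.
  destruct (HA (X * R)%type
              (fun i y => 0 < snd i /\ P (fst i) (snd i) /\ d (fst i) y < snd i / 2))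
    as [l Hl].
  - intros [c rho] y (Hrho & Hc & Hy); simpl in *.
    exists (rho / 2 - d c y); split; [lra|].
    intros z Hz. repeat split; auto. pose proof (dist_triangle c y z). lra.
  - intros x Hx. destruct (HP x Hx) as [rho [Hrho Hx']].
    exists (x, rho); simpl. rewrite dist_refl. repeat split; auto; lra.
  - destruct (list_pos_lower_bound (fun i => snd i / 2) l) as [r [Hr Hlow]].
    exists r; split; [exact Hr|].
    intros x Hx. destruct (Hl x Hx) as [[c rho] [Hi (Hrho & Hc & Hcx)]]; simpl in *.
    exists c, rho; split; [exact Hc|].
    assert (r <= rho / 2) by (apply (Hlow _ Hi); simpl; lra). lra.
Qed.

Lemma compact_separated A x : Defs.compact d A -> ~ A x ->
  exists r, 0 < r /\ forall a, A a -> r <= d x a.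
Proof.
  intros HA Hx.
  destruct (compact_lebesgue_number (fun c rho => 2 * rho <= d x c) HA)
    as [r [Hr Hcov]].
  - intros c Hc. assert (0 < d x c) by (apply dist_pos; intros ->; contradiction).
    exists (d x c / 2); split; lra.
  - exists r; split; [exact Hr|].
    intros a Ha. destruct (Hcov a Ha) as (c & rho & Hc & Hca).
    pose proof (dist_triangle x a c). pose proof (dist_ge0 c a).
    rewrite (dist_sym a c) in *. lra.
Qed.

Lemma dist_pt_set_le x B b : B b -> dist_pt_set d x B <= d x b.
Proof.
  intros Hb. apply Glb_Rbar_le_elem; [|eauto].
  intros r [b' [_ ->]]; apply dist_ge0.
Qed.

Lemma dist_pt_set_lt_elim x B b0 c : B b0 -> dist_pt_set d x B < c ->
  exists b, B b /\ d x b < c.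
Proof.
  intros Hb0 Hc.
  destruct (@Glb_Rbar_lt_elim (fun r => exists b, B b /\ r = d x b) (d x b0) c)
    as [r [[b [Hb ->]] Hr]]; eauto.
  intros r [b [_ ->]]; apply dist_ge0.
Qed.

Lemma excess_le A B M : 0 <= M ->
  (forall a, A a -> exists b, B b /\ d a b <= M) -> excess d A B <= M.
Proof.
  intros HM HAB. apply Lub_Rbar_le_bound; [exact HM|].
  intros r [a [Ha ->]]. destruct (HAB a Ha) as [b [Hb Hab]].
  eapply Rle_trans; [apply dist_pt_set_le, Hb|exact Hab].
Qed.

Lemma excess_lt_elim A B delta : in_KX d A -> (exists b, B b) ->
  excess d A B < delta -> forall a, A a -> exists b, B b /\ d a b < delta.
Proof.
  intros [[a0 Ha0] HA] [b0 Hb0] Hex a Ha.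
  destruct (compact_bounded a0 HA) as [M HM].
  apply (dist_pt_set_lt_elim a B b0 Hb0).
  apply (@Lub_Rbar_lt_elem (fun r => exists a, A a /\ r = dist_pt_set d a B)
           (M + d a0 b0) delta); [|exact Hex|eauto].
  intros r [a' [Ha' ->]].
  eapply Rle_trans; [apply dist_pt_set_le, Hb0|].
  pose proof (dist_triangle a' a0 b0). specialize (HM a' Ha').
  rewrite (dist_sym a' a0) in *. lra.
Qed.

Lemma hausdorff_le A B M : 0 <= M ->
  (forall a, A a -> exists b, B b /\ d a b <= M) ->
  (forall b, B b -> exists a, A a /\ d b a <= M) -> hausdorff d A B <= M.
Proof. intros HM HAB HBA. apply Rmax_lub; now apply excess_le. Qed.

Lemma hausdorff_lt_elim A B delta : in_KX d A -> in_KX d B ->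
  hausdorff d A B < delta ->
  (forall a, A a -> exists b, B b /\ d a b < delta) /\
  (forall b, B b -> exists a, A a /\ d b a < delta).
Proof.
  intros HA HB Hh. apply Rmax_Rlt in Hh as [HAB HBA].
  split; eapply excess_lt_elim; eauto; [apply HB|apply HA].
Qed.

End CompactMetric.

Section Spectre.
Variables (X : Type) (add : X -> X -> X) (opp : X -> X) (zero : X)
          (d : X -> X -> R).
Hypotheses (HG : abelian_group add opp zero) (Hm : is_metric d)
           (HT : translation_invariant add d).

Lemma add_zero_r x : add x zero = x.
Proof. destruct HG as (_ & _ & H & _); apply H. Qed.

Lemma add_zero_l x : add zero x = x.
Proof. destruct HG as (_ & HC & H0 & _); now rewrite HC, H0. Qed.

Lemma opp_add_cancel x y : add (opp x) (add x y) = y.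
Proof.
  destruct HG as (HA & HC & _ & HN).
  now rewrite HA, (HC (opp x) x), HN, add_zero_l.
Qed.

Lemma add_opp_cancel x y : add x (add (opp x) y) = y.
Proof.
  destruct HG as (HA & _ & _ & HN). now rewrite HA, HN, add_zero_l.
Qed.

Lemma opp_opp x : opp (opp x) = x.
Proof.
  destruct HG as (_ & HC & _ & HN).
  transitivity (add (opp (opp x)) (add (opp x) x)).
  - now rewrite (HC (opp x) x), HN, add_zero_r.
  - apply opp_add_cancel.
Qed.

Lemma opp_zero : opp zero = zero.
Proof. destruct HG as (_ & _ & _ & HN). rewrite <- (add_zero_l (opp zero)). apply HN. Qed.

Lemma dist_add_l z x y : d (add z x) (add z y) = d x y.
Proof. destruct HG as (_ & HC & _). now rewrite (HC z x), (HC z y), <- HT. Qed.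

Lemma dist_opp x y : d (opp x) (opp y) = d x y.
Proof.
  destruct HG as (_ & HC & _).
  rewrite (HT (opp x) (opp y) (add x y)), opp_add_cancel, (HC x y), opp_add_cancel.
  apply dist_sym, Hm.
Qed.

Lemma spectre_zero B : spectre add opp B zero.
Proof. intros b Hb; left; now rewrite add_zero_r. Qed.

Definition approx_spectre (A : X -> Prop) (r : R) (z : X) : Prop :=
  forall a, A a -> exists a', A a' /\ (d (add a z) a' < r \/ d (add a (opp z)) a' < r).

Lemma approx_spectre_mono A r s z :
  r <= s -> approx_spectre A r z -> approx_spectre A s z.
Proof.
  intros Hrs Hz a Ha. destruct (Hz a Ha) as [a' [Ha' Hd]].
  exists a'; split; [exact Ha'|lra].
Qed.

Lemma approx_spectre_opp A r z : approx_spectre A r z -> approx_spectre A r (opp z).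
Proof.
  intros Hz a Ha. destruct (Hz a Ha) as [a' [Ha' Hd]].
  exists a'; split; [exact Ha'|]. rewrite opp_opp. tauto.
Qed.

Lemma approx_spectre_of_hausdorff A B delta z :
  in_KX d A -> in_KX d B -> hausdorff d A B < delta -> spectre add opp B z ->
  approx_spectre A (2 * delta) z.
Proof.
  intros HA HB Hh Hz a Ha.
  destruct (hausdorff_lt_elim Hm HA HB Hh) as [HAB HBA].
  destruct (HAB a Ha) as [b [Hb Hab]].
  assert (Hshift : forall w, B (add b w) ->
            exists a', A a' /\ d (add a w) a' < 2 * delta).
  { intros w Hw. destruct (HBA _ Hw) as [a' [Ha' Hd]].
    exists a'; split; [exact Ha'|].
    pose proof (dist_triangle Hm (add a w) (add b w) a') as Htri.
    rewrite <- HT in Htri. lra. }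
  destruct (Hz b Hb) as [Hw|Hw]; destruct (Hshift _ Hw) as [a' [Ha' Hd]]; eauto.
Qed.

Lemma not_spectre_isolated A w : Defs.compact d A -> ~ spectre add opp A w ->
  exists rho, 0 < rho /\ forall u, d u w < rho -> ~ approx_spectre A rho u.
Proof.
  intros HA Hw.
  apply not_all_ex_not in Hw as [a Ha]. apply imply_to_and in Ha as [Ha Hout].
  apply not_or_and in Hout as [Hplus Hminus].
  destruct (compact_separated Hm _ HA Hplus) as [r1 [Hr1 H1]].
  destruct (compact_separated Hm _ HA Hminus) as [r2 [Hr2 H2]].
  pose proof (Rmin_l r1 r2). pose proof (Rmin_r r1 r2).
  exists (Rmin r1 r2 / 2); split; [pose proof (Rmin_pos r1 r2 Hr1 Hr2); lra|].
  intros u Hu Happ. rewrite (dist_sym Hm) in Hu.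
  destruct (Happ a Ha) as [a' [Ha' [Hd|Hd]]].
  - specialize (H1 a' Ha').
    pose proof (dist_triangle Hm (add a w) (add a u) a') as Htri.
    rewrite dist_add_l in Htri. lra.
  - specialize (H2 a' Ha').
    pose proof (dist_triangle Hm (add a (opp w)) (add a (opp u)) a') as Htri.
    rewrite dist_add_l, dist_opp in Htri. lra.
Qed.

Lemma approx_spectre_locally_small A a0 c eps : Defs.compact d A ->
  (forall z, spectre add opp A z <-> z = zero) -> 0 < eps ->
  exists rho, 0 < rho /\
    forall u, d (add a0 u) c < rho -> approx_spectre A rho u -> d u zero < eps.
Proof.
  intros HA HS Heps. set (w := add (opp a0) c).
  assert (Hc : c = add a0 w) by (unfold w; now rewrite add_opp_cancel).
  rewrite Hc. destruct (classic (spectre add opp A w)) as [Hw|Hw].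
  - apply HS in Hw. rewrite Hw.
    exists eps; split; [exact Heps|]. intros u Hu _. now rewrite dist_add_l in Hu.
  - destruct (not_spectre_isolated HA Hw) as [rho [Hrho Hiso]].
    exists rho; split; [exact Hrho|]. intros u Hu Happ.
    rewrite dist_add_l in Hu. now destruct (Hiso u Hu).
Qed.

Lemma approx_spectre_small A eps : in_KX d A ->
  (forall z, spectre add opp A z <-> z = zero) -> 0 < eps ->
  exists r, 0 < r /\ forall z, approx_spectre A r z -> d z zero < eps.
Proof.
  intros [[a0 Ha0] HA] HS Heps.
  destruct (compact_lebesgue_number Hm
              (fun c rho => forall u, d (add a0 u) c < rho ->
                              approx_spectre A rho u -> d u zero < eps) HA)
    as [r [Hr Hleb]].
  { intros c _. now apply approx_spectre_locally_small. }
  exists r; split; [exact Hr|].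
  assert (Hplus : forall z, approx_spectre A r z ->
            (exists a', A a' /\ d (add a0 z) a' < r) -> d z zero < eps).
  { intros z Hz [a' [Ha' Hd]]. destruct (Hleb a' Ha') as (c & rho & Hc & Hca).
    pose proof (dist_ge0 Hm c a'). apply Hc.
    - pose proof (dist_triangle Hm (add a0 z) a' c).
      rewrite (dist_sym Hm a' c) in *. lra.
    - apply (approx_spectre_mono (r := r)); [lra|exact Hz]. }
  intros z Hz. destruct (Hz a0 Ha0) as [a' [Ha' [Hd|Hd]]].
  - apply Hplus; eauto.
  - rewrite <- dist_opp, opp_zero.
    apply Hplus; [now apply approx_spectre_opp|]. eauto.
Qed.

Lemma hausdorff_spectre_le A B M :
  (forall z, spectre add opp A z <-> z = zero) -> 0 <= M ->
  (forall z, spectre add opp B z -> d z zero <= M) ->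
  hausdorff d (spectre add opp A) (spectre add opp B) <= M.
Proof.
  intros HS HM HB. apply (hausdorff_le Hm); [exact HM| |].
  - intros a Ha. apply HS in Ha as ->.
    exists zero; split; [apply spectre_zero|]. rewrite (dist_refl Hm); exact HM.
  - intros b Hb. exists zero; split; [now apply HS|]. now apply HB.
Qed.

End Spectre.

Theorem corollary3p9 (X : Type) (add : X -> X -> X) (opp : X -> X) (zero : X)
  (d : X -> X -> R)
  (HX : complete_lc_abelian_metric_group add opp zero d)
  (A : X -> Prop) (HA : in_KX d A)
  (HS : forall z, spectre add opp A z <-> z = zero) :
  forall eps, 0 < eps -> exists delta, 0 < delta /\
    forall B, in_KX d B -> hausdorff d A B < delta ->
      hausdorff d (spectre add opp A) (spectre add opp B) < eps.
Proof.
  intros eps Heps. destruct HX as (HG & Hm & HT & _ & _).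
  destruct (approx_spectre_small HG Hm HT (eps := eps / 2) HA HS) as [r [Hr Hsmall]];
    [lra|].
  exists (r / 2); split; [lra|]. intros B HB Hh.
  apply Rle_lt_trans with (eps / 2); [|lra].
  apply (hausdorff_spectre_le HG Hm); [exact HS|lra|].
  intros z Hz. left. apply Hsmall.
  replace r with (2 * (r / 2)) by field.
  exact (approx_spectre_of_hausdorff Hm HT HA HB Hh Hz).
Qed.
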